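(* Let $p\in(0,1)$ and let $(\lambda_n)_{n\ge1}$ be a sequence with $\lambda_1=1$ and $0<\lambda_n\le\lambda_{n-1}$ for all $n>1$. Let $r_1,r_2,\dots$ be $\{0,1\}$-valued random variables with $\Pr(r_1=1)=p$ and, for every $n\ge2$, $\Pr(r_n=1\mid r_1,\dots,r_{n-1})=\lambda_n p+(1-\lambda_n)\bar p_{n-1}$, where $\bar p_m=\frac1m\sum_{i=1}^m r_i$. Define $\hat r_1=r_1$, $\hat r_i=\frac{r_i-(1-\lambda_i)\bar p_{i-1}}{\lambda_i}$ for $i\ge2$, and for positive weights $(\omega_i)$ let $\hat p_n=\frac{\sum_{i=1}^n\omega_i\hat r_i}{\sum_{i=1}^n\omega_i}$. (a) If $\omega_i=1$ for all $i$ and $\sum_{i=1}^n\lambda_i^{-2}=o(n^2)$ as $n\to\infty$, then $\hat p_n$ is a consistent estimator of $p$, i.e. $\Pr(|\hat p_n-p|>\epsilon)\to0$ for every $\epsilon>0$. (b) If $\omega_i=\lambda_i$ for all $i$ and $n=o\big((\sum_{i=1}^n\lambda_i)^2\big)$ as $n\to\infty$, then $\hat p_n$ is a consistent estimator of $p$. *)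

From HB Require Import structures.
From mathcomp Require Import all_boot all_order all_algebra.
From mathcomp Require Import all_classical all_reals all_analysis.
Set Implicit Arguments. Unset Strict Implicit. Unset Printing Implicit Defensive.
Import Order.TTheory GRing.Theory Num.Theory.
Import numFieldNormedType.Exports.
Local Open Scope ring_scope.
Local Open Scope classical_set_scope.

(* Indices are 1-based as in the paper: r 1, r 2, ...; r 0 is unused. *)

Section Defs.
Context {R : realType} {T : Type}.

Definition pbar (r : nat -> T -> R) (m : nat) (x : T) : R :=
  (\sum_(1 <= i < m.+1) r i x) / m%:R.

Definition rhat (lam : nat -> R) (r : nat -> T -> R) (i : nat) (x : T) : R :=
  if i == 1%N then r 1%N x
  else (r i x - (1 - lam i) * pbar r i.-1 x) / lam i.

Definition phat (w lam : nat -> R) (r : nat -> T -> R) (n : nat) (x : T) : R :=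
  (\sum_(1 <= i < n.+1) w i * rhat lam r i x) / (\sum_(1 <= i < n.+1) w i).
End Defs.

Definition history {R : realType} {T : Type} (r : nat -> T -> R)
    (n : nat) (b : nat -> bool) : set T :=
  [set x | forall i, (1 <= i < n)%N -> r i x = (b i)%:R].

(* The model: r_i are {0,1}-valued random variables, P(r_1 = 1) = p, and for
   n >= 2, P(r_n = 1 | r_1,...,r_{n-1}) = lam_n p + (1 - lam_n) pbar_{n-1},
   stated as elementary conditional probability given the (finitely valued)
   history vector: for every history b,
   P(history b /\ r_n = 1) = (lam_n p + (1-lam_n) * mean(b)) * P(history b). *)
Definition reinforced_model {R : realType} {d : measure_display}
    {T : measurableType d} (P : probability T R) (p : R) (lam : nat -> R)
    (r : nat -> T -> R) : Prop :=
  [/\ (forall i, measurable_fun setT (r i)),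
      (forall i x, r i x = 0 \/ r i x = 1),
      P [set x | r 1%N x = 1] = p%:E &
      (forall n (b : nat -> bool), (2 <= n)%N ->
         P (history r n b `&` [set x | r n x = 1]) =
         ((lam n * p + (1 - lam n) *
             ((\sum_(1 <= i < n) (b i)%:R) / n.-1%:R))%:E
          * P (history r n b))%E)].

Definition consistent {R : realType} {d : measure_display}
    {T : measurableType d} (P : probability T R) (est : nat -> T -> R) (p : R)
    : Prop :=
  forall eps : R, 0 < eps ->
    (fun n => P [set x | eps < `|est n x - p|]) @ \oo --> 0%E.

From HB Require Import structures.
From mathcomp Require Import all_boot all_order all_algebra.
From mathcomp Require Import all_classical all_reals all_analysis.
From mathcomp Require Import measurable_realfun ring lra.
Set Implicit Arguments.
Unset Strict Implicit.
Unset Printing Implicit Defensive.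
Import Order.TTheory GRing.Theory Num.Theory.
Import numFieldNormedType.Exports.
Local Open Scope ring_scope.
Local Open Scope classical_set_scope.

(* Write [phat_n - p = S_n / W_n] with [W_n = sum_(i <= n) w_i] and
   [S_n = sum_(i <= n) w_i (rhat_i - p)].  Given the history of the first [n]
   draws, the increment [w_(n+1) (rhat_(n+1) - p)] equals
   [w_(n+1) (r_(n+1) - c_n) / lam_(n+1)], where [c_n] is the conditional
   probability that [r_(n+1) = 1]; it therefore has conditional mean zero and
   conditional second moment at most [(w_(n+1) / lam_(n+1))^2].  Hence
   [E[S_n^2] <= sum_(i <= n) (w_i / lam_i)^2], and Chebyshev's inequality gives
   [P(|phat_n - p| > eps) <= sum_(i <= n) (w_i / lam_i)^2 / (eps W_n)^2], which
   tends to 0 under either growth condition.  Every expectation is a finite sum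
   over the 2^n possible histories, so no conditional expectation is needed. *)

Section HistorySums.
Variable R : realType.

Definition set_hist (b : nat -> bool) (k : nat) (c : bool) : nat -> bool :=
  fun i => if i == k then c else b i.

(* [hsum n G] sums [G b] over the 2^n histories [b] that are arbitrary on
   [1..n] and [false] elsewhere. *)
Fixpoint hsum (n : nat) (G : (nat -> bool) -> R) : R :=
  if n is m.+1 then
    hsum m (fun b => G (set_hist b m.+1 false) + G (set_hist b m.+1 true))
  else G (fun _ => false).

Lemma hsumD n F G : hsum n (fun b => F b + G b) = hsum n F + hsum n G.
Proof.
elim: n F G => [|n IH] F G //=.
by rewrite -IH; congr (hsum n _); apply: funext => b; ring.
Qed.

Lemma hsumZ n c F : hsum n (fun b => c * F b) = c * hsum n F.
Proof.
elim: n F => [|n IH] F //=.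
by rewrite -IH; congr (hsum n _); apply: funext => b; ring.
Qed.

Lemma ler_hsum n F G : (forall b, F b <= G b) -> hsum n F <= hsum n G.
Proof. by elim: n F G => [|n IH] F G FG //=; apply: IH => b; apply: lerD. Qed.

End HistorySums.

Definition bool_process {R : realType} (b : nat -> bool) : nat -> unit -> R :=
  fun i _ => (b i)%:R.

Definition wsum {R : numDomainType} (w : nat -> R) n :=
  \sum_(1 <= i < n.+1) w i.

Lemma wsum1 (R : numDomainType) n : wsum (fun=> 1 : R) n = n%:R.
Proof. by rewrite /wsum sumr_const_nat subn1. Qed.

Lemma wsum_gt0 (R : numDomainType) (w : nat -> R) n :
  (forall i, (0 < i)%N -> 0 < w i) -> 0 < wsum w n.+1.
Proof.
move=> w_gt0; elim: n => [|n IH]; first by rewrite /wsum big_nat1 w_gt0.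
by rewrite /wsum big_nat_recr //= addr_gt0 // w_gt0.
Qed.

Section Locality.
Variables (R : realType) (T1 T2 : Type).
Variables (r1 : nat -> T1 -> R) (r2 : nat -> T2 -> R) (x1 : T1) (x2 : T2).

Lemma eq_pbar m :
  (forall i, (1 <= i <= m)%N -> r1 i x1 = r2 i x2) ->
  pbar r1 m x1 = pbar r2 m x2.
Proof.
move=> r12; rewrite /pbar; congr (_ / _); apply: eq_big_nat => i /andP[i1 im].
by apply: r12; rewrite i1 -ltnS.
Qed.

Lemma eq_rhat lam k : (1 <= k)%N ->
  (forall i, (1 <= i <= k)%N -> r1 i x1 = r2 i x2) ->
  rhat lam r1 k x1 = rhat lam r2 k x2.
Proof.
move=> k1 r12; rewrite /rhat; case: eqP => _; first by apply: r12; rewrite k1.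
rewrite r12 ?k1 ?leqnn // (@eq_pbar k.-1) // => i /andP[i1 ik].
by apply: r12; rewrite i1 (leq_trans ik) // leq_pred.
Qed.

Lemma eq_phat w lam n :
  (forall i, (1 <= i <= n)%N -> r1 i x1 = r2 i x2) ->
  phat w lam r1 n x1 = phat w lam r2 n x2.
Proof.
move=> r12; rewrite /phat; congr (_ / _); apply: eq_big_nat => i /andP[i1 im].
congr (_ * _); apply: eq_rhat => // j /andP[j1 ji].
by apply: r12; rewrite j1 (leq_trans ji) // -ltnS.
Qed.

End Locality.

Section BinaryProcess.
Variables (R : realType) (d : measure_display) (T : measurableType d).
Variables (P : probability T R) (r : nat -> T -> R).
Hypothesis r_measurable : forall i, measurable_fun setT (r i).
Hypothesis r01 : forall i x, r i x = 0 \/ r i x = 1.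

Definition Pr (A : set T) : R := fine (P A).

Lemma PrE A : measurable A -> P A = (Pr A)%:E.
Proof. by move=> mA; rewrite /Pr fineK //; apply: fin_num_measure. Qed.

Lemma Pr_ge0 A : 0 <= Pr A.
Proof. exact/fine_ge0/measure_ge0. Qed.

Lemma PrT : Pr setT = 1.
Proof. by rewrite /Pr probability_setT. Qed.

Lemma Pr0 : Pr set0 = 0.
Proof. by rewrite /Pr measure0. Qed.

Lemma PrU A B : measurable A -> measurable B -> A `&` B = set0 ->
  Pr (A `|` B) = Pr A + Pr B.
Proof.
move=> mA mB AB; have : P (A `|` B) = (P A + P B)%E := measureU P mA mB AB.
by rewrite !PrE //; [case | exact: measurableU].
Qed.

Lemma measurable_r_eq i (c : R) : measurable [set x | r i x = c].
Proof.
by have := r_measurable i measurableT (measurable_set1 c); rewrite setTI.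
Qed.

Lemma eq_history n b b' : (forall i, (1 <= i < n)%N -> b i = b' i) ->
  history r n b = history r n b'.
Proof.
move=> bb'; apply/seteqP; split => x hx i ni; first by rewrite -bb' ?hx.
by rewrite bb' ?hx.
Qed.

Lemma history1 b : history r 1 b = setT.
Proof. by apply/seteqP; split => x // _ [|[]]. Qed.

Lemma historyS n b :
  history r n.+2 b = history r n.+1 b `&` [set x | r n.+1 x = (b n.+1)%:R].
Proof.
apply/seteqP; split => x /=.
  move=> hx; split; last by apply: hx; rewrite /= ltnSn.
  by move=> i /andP[i1 ilt]; apply: hx; rewrite i1 ltnW.
move=> [hx hn] i /andP[i1]; rewrite ltnS leq_eqVlt => /orP[/eqP-> //|ilt].
by apply: hx; rewrite i1.
Qed.

Lemma history_set_hist n b c : history r n.+2 (set_hist b n.+1 c) =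
  history r n.+1 b `&` [set x | r n.+1 x = c%:R].
Proof.
rewrite historyS /set_hist eqxx (@eq_history n.+1 _ b) // => i /andP[_ ilt].
by rewrite ltn_eqF.
Qed.

Lemma measurable_history n b : measurable (history r n b).
Proof.
elim: n b => [|[|n] IH] b.
- by rewrite (_ : history r 0 b = setT) //; apply/seteqP; split => x // _ [|[]].
- by rewrite history1.
- by rewrite historyS; apply: measurableI => //; apply: measurable_r_eq.
Qed.

Lemma Pr_split A i : measurable A ->
  Pr A = Pr (A `&` [set x | r i x = 0]) + Pr (A `&` [set x | r i x = 1]).
Proof.
move=> mA; rewrite -PrU; last 3 first.
- exact/measurableI/measurable_r_eq.
- exact/measurableI/measurable_r_eq.
- by apply/seteqP; split => x //= [[_ ->] [_ /eqP]]; rewrite eq_sym oner_eq0.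
congr Pr; apply/seteqP; split => [x Ax | x [] []] //=.
by case: (r01 i x) => ->; [left | right].
Qed.

Lemma Pr_partition n A : measurable A ->
  Pr A = hsum n (fun b => Pr (A `&` history r n.+1 b)).
Proof.
move=> mA; elim: n => [|n IH] /=; first by rewrite history1 setIT.
rewrite IH; congr (hsum n _); apply: funext => b.
rewrite !history_set_hist mulr0n mulr1n !setIA.
exact/Pr_split/measurableI/measurable_history.
Qed.

Lemma measurable_pbar m : measurable_fun setT (pbar r m).
Proof. by apply: measurable_funM => //; exact: measurable_sum. Qed.

Lemma measurable_rhat lam i : measurable_fun setT (rhat lam r i).
Proof.
rewrite /rhat; case: (i == 1%N) => /=; first exact: r_measurable.
apply: measurable_funM => //; apply: measurable_funB => //.
exact/measurable_funM/measurable_pbar.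
Qed.

Lemma measurable_phat w lam n : measurable_fun setT (phat w lam r n).
Proof.
apply: measurable_funM => //; apply: measurable_sum => i.
exact/measurable_funM/measurable_rhat.
Qed.

Lemma measurable_phat_dev w lam n p eps :
  measurable [set x | eps < `|phat w lam r n x - p|].
Proof.
have mf : measurable_fun setT (fun x => eps < `|phat w lam r n x - p|).
  apply: measurable_fun_ltr => //; apply: measurableT_comp => //.
  by apply: measurable_funB => //; exact: measurable_phat.
by have := mf measurableT [set true] I; rewrite setTI.
Qed.

Section Model.
Variables (p : R) (lam : nat -> R).
Hypothesis lam1 : lam 1%N = 1.
Hypothesis lam_neq0 : forall i, (1 < i)%N -> lam i != 0.
Hypothesis r1_law : P [set x | r 1%N x = 1] = p%:E.
Hypothesis cond_law : forall n (b : nat -> bool), (2 <= n)%N ->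
  P (history r n b `&` [set x | r n x = 1]) =
  ((lam n * p + (1 - lam n) * ((\sum_(1 <= i < n) (b i)%:R) / n.-1%:R))%:E
   * P (history r n b))%E.

(* [hprob n b] is the probability of the history [b] of the first [n] draws
   (the event [history r n.+1 b]) and [cprob n b] the conditional probability
   of [r_(n+1) = 1] given it.  For [n = 0] the junk value [0 / 0] in [cprob]
   is multiplied by [1 - lam 1 = 0], leaving [p]. *)
Definition hprob n b := Pr (history r n.+1 b).

Definition cprob n (b : nat -> bool) :=
  lam n.+1 * p + (1 - lam n.+1) * ((\sum_(1 <= i < n.+1) (b i)%:R) / n%:R).

Lemma hprob_true n b :
  hprob n.+1 (set_hist b n.+1 true) = cprob n b * hprob n b.
Proof.
rewrite /hprob history_set_hist mulr1n; case: n => [|n].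
  rewrite history1 setTI PrT /cprob lam1 subrr mul0r addr0 mul1r mulr1.
  by rewrite /Pr r1_law.
by rewrite /Pr cond_law // (PrE (measurable_history _ _)).
Qed.

Lemma hprob_false n b :
  hprob n.+1 (set_hist b n.+1 false) = (1 - cprob n b) * hprob n b.
Proof.
have := @Pr_split _ n.+1 (measurable_history n.+1 b).
have := hprob_true n b; rewrite /hprob !history_set_hist mulr1n mulr0n => ->.
by move=> split_eq; rewrite mulrBl mul1r {1}split_eq addrK.
Qed.

Lemma hsum_hprob n : hsum n (hprob n) = 1.
Proof.
rewrite -PrT (@Pr_partition n _ measurableT).
by congr (hsum n _); apply: funext => b; rewrite setTI.
Qed.

Definition centered_sum (w : nat -> R) n b :=
  \sum_(1 <= i < n.+1) w i * (rhat lam (bool_process b) i tt - p).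

Definition second_moment w n :=
  hsum n (fun b => hprob n b * centered_sum w n b ^+ 2).

Lemma centered_sum_set_hist w n b c :
  centered_sum w n (set_hist b n.+1 c) = centered_sum w n b.
Proof.
apply: eq_big_nat => i /andP[i1 iln]; congr (_ * (_ - _)).
apply: eq_rhat => // j /andP[_ ji].
by rewrite /bool_process /set_hist ltn_eqF // (leq_ltn_trans ji).
Qed.

Lemma rhat_next n b (c : bool) :
  rhat lam (bool_process (set_hist b n.+1 c)) n.+1 tt - p =
  (c%:R - cprob n b) / lam n.+1.
Proof.
rewrite /rhat /bool_process /set_hist eqxx /cprob; case: n => [|n] /=.
  by rewrite lam1 subrr mul0r addr0 !mul1r divr1.
rewrite (@eq_pbar _ _ _ _ (bool_process b) _ tt); last first.
  by move=> i /andP[_ ilt]; rewrite /bool_process ltn_eqF.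
rewrite /pbar /bool_process; field.
by rewrite lam_neq0 // addrC natr1 pnatr_eq0.
Qed.

Lemma centered_sum_next w n b (c : bool) :
  centered_sum w n.+1 (set_hist b n.+1 c) =
  centered_sum w n b + w n.+1 * ((c%:R - cprob n b) / lam n.+1).
Proof.
rewrite /centered_sum big_nat_recr //= -/(centered_sum _ _ _).
by rewrite centered_sum_set_hist rhat_next.
Qed.

(* The cross term vanishes because [cprob n b] is the conditional mean of
   the next draw; what remains is [hprob * a^2 * c (1 - c)] with
   [a = w_(n+1) / lam_(n+1)], and [c (1 - c) <= 1]. *)
Lemma second_momentS w n :
  second_moment w n.+1 <= second_moment w n + (w n.+1 / lam n.+1) ^+ 2.
Proof.
set a := w n.+1 / lam n.+1; rewrite /second_moment /=.
rewrite (_ : (fun b => _) = fun b => hprob n b * centered_sum w n b ^+ 2 +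
    a ^+ 2 * (hprob n b * (cprob n b * (1 - cprob n b)))); last first.
  apply: funext => b.
  by rewrite hprob_true hprob_false !centered_sum_next /a /=; ring.
rewrite hsumD hsumZ lerD2l -[leRHS]mulr1 ler_wpM2l ?sqr_ge0 //.
rewrite -[leRHS](hsum_hprob n).
apply: ler_hsum => b; apply: ler_piMr; first exact: Pr_ge0.
set c := cprob n b; nra.
Qed.

Lemma second_moment_le w n :
  second_moment w n <= \sum_(1 <= i < n.+1) (w i / lam i) ^+ 2.
Proof.
elim: n => [|n IH].
  by rewrite /second_moment /= /centered_sum !big_geq // expr2 !mulr0.
rewrite big_nat_recr //=; apply: le_trans (second_momentS w n) _.
by rewrite lerD2r.
Qed.

Lemma phat_centered w n b : wsum w n != 0 ->
  phat w lam (bool_process b) n tt - p = centered_sum w n b / wsum w n.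
Proof.
move=> W0; rewrite /phat /centered_sum -/(wsum w n).
have -> : \sum_(1 <= i < n.+1) w i * (rhat lam (bool_process b) i tt - p) =
    \sum_(1 <= i < n.+1) w i * rhat lam (bool_process b) i tt - wsum w n * p.
  by rewrite mulr_suml -sumrB; apply: eq_bigr => i _; rewrite mulrBr.
by field.
Qed.

Lemma sqr_ge1_of_lt (e x : R) : 0 < e -> e < `|x| -> 1 <= (x / e) ^+ 2.
Proof.
move=> e0 ex; have ge1 : 1 <= `|x / e|.
  by rewrite normrM normfV (gtr0_norm e0) ler_pdivlMr // mul1r ltW.
rewrite -real_normK ?num_real // expr2.
exact: le_trans ge1 (ler_peMr (normr_ge0 _) ge1).
Qed.

Lemma Pr_phat_dev_history w n eps b : 0 < eps -> wsum w n != 0 ->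
  Pr ([set x | eps < `|phat w lam r n x - p|] `&` history r n.+1 b) <=
  (eps * wsum w n) ^- 2 * (hprob n b * centered_sum w n b ^+ 2).
Proof.
move=> e0 W0.
have phat_on_b x : history r n.+1 b x ->
    phat w lam r n x = phat w lam (bool_process b) n tt.
  by move=> hx; apply: eq_phat => i /andP[i1 iln]; apply: hx; rewrite i1 ltnS.
have [dev|small] := ltrP eps `|centered_sum w n b / wsum w n|.
  rewrite (_ : _ `&` _ = history r n.+1 b); last first.
    apply/seteqP; split => [x [] // | x hx]; split => //=.
    by rewrite phat_on_b // phat_centered.
  have k_ge1 : 1 <= (eps * wsum w n) ^- 2 * centered_sum w n b ^+ 2.
    have -> : (eps * wsum w n) ^- 2 * centered_sum w n b ^+ 2 =
        (centered_sum w n b / wsum w n / eps) ^+ 2 by field; rewrite W0 gt_eqF.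
    exact: sqr_ge1_of_lt.
  by rewrite [leRHS]mulrCA; exact: ler_peMr (Pr_ge0 _) k_ge1.
rewrite (_ : _ `&` _ = set0) ?Pr0; last first.
  apply/seteqP; split => x // [/= dx hx].
  by move: small; rewrite -phat_centered // -(phat_on_b x hx) leNgt dx.
rewrite mulr_ge0 ?invr_ge0 ?sqr_ge0 //.
exact: mulr_ge0 (Pr_ge0 _) (sqr_ge0 _).
Qed.

Lemma Pr_phat_dev_le w n eps : 0 < eps -> wsum w n != 0 ->
  Pr [set x | eps < `|phat w lam r n x - p|] <=
  (eps ^+ 2)^-1 * ((\sum_(1 <= i < n.+1) (w i / lam i) ^+ 2) / wsum w n ^+ 2).
Proof.
move=> e0 W0; rewrite (Pr_partition n (measurable_phat_dev _ _ _ _ _)).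
apply: le_trans (ler_hsum _ (fun b => Pr_phat_dev_history b e0 W0)) _.
rewrite hsumZ exprMn invfM -mulrA ler_wpM2l ?invr_ge0 ?sqr_ge0 //.
by rewrite mulrC ler_wpM2r ?invr_ge0 ?sqr_ge0 //; exact: second_moment_le.
Qed.

Lemma phat_consistent w : (forall n, (0 < n)%N -> wsum w n != 0) ->
  (fun n => (\sum_(1 <= i < n.+1) (w i / lam i) ^+ 2) / wsum w n ^+ 2)
    @ \oo --> 0 ->
  consistent P (phat w lam r) p.
Proof.
move=> W0 rate eps e0.
apply: cvg_EFin; first by near=> n; apply/fin_num_measure/measurable_phat_dev.
apply: (@squeeze_cvgr _ _ _ _ (fun=> 0) (fun n => (eps ^+ 2)^-1 *
  ((\sum_(1 <= i < n.+1) (w i / lam i) ^+ 2) / wsum w n ^+ 2))).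
- near=> n; apply/andP; split; first exact: Pr_ge0.
  apply: Pr_phat_dev_le => //.
  by apply: W0; near: n; exact: nbhs_infty_gt.
- exact: cvg_cst.
- by have := cvgMl_tmp (a := (eps ^+ 2)^-1) rate; rewrite mulr0; apply.
Unshelve. all: end_near.
Qed.

End Model.
End BinaryProcess.

Theorem corollaryA15 (R : realType) (d : measure_display) (T : measurableType d)
  (P : probability T R) (p : R) (lam : nat -> R) (r : nat -> T -> R) :
  0 < p < 1 ->
  lam 1%N = 1 ->
  (forall n, (1 < n)%N -> 0 < lam n <= lam n.-1) ->
  reinforced_model P p lam r ->
  ((fun n : nat => (\sum_(1 <= i < n.+1) (lam i)^-2) / (n%:R ^+ 2)) @ \oo --> 0 ->
     consistent P (phat (fun _ => 1) lam r) p)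
  /\
  ((fun n : nat => n%:R / (\sum_(1 <= i < n.+1) lam i) ^+ 2) @ \oo --> 0 ->
     consistent P (phat lam lam r) p).
Proof.
move=> _ lam1 lam_dec [r_meas r01 r1_law cond_law].
have lam_gt0 i : (0 < i)%N -> 0 < lam i.
  by case: i => [//|[_|i _]]; [rewrite lam1 | case/andP: (lam_dec i.+2 isT)].
have lam_neq0 i : (1 < i)%N -> lam i != 0 by move=> /ltnW/lam_gt0/lt0r_neq0.
have consistent_w := phat_consistent r_meas r01 lam1 lam_neq0 r1_law cond_law.
split => rate.
- apply: (consistent_w (fun=> 1)) => [n n0|].
    by rewrite wsum1 pnatr_eq0 -lt0n.
  apply: cvg_trans _ rate; apply: near_eq_cvg; apply: nearW => n.
  rewrite wsum1; congr (_ / _).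
  by apply: eq_bigr => i _; rewrite div1r exprVn.
- apply: (consistent_w lam) => [[//|n] _|].
    by rewrite lt0r_neq0 ?wsum_gt0.
  apply: cvg_trans _ rate; apply: near_eq_cvg; apply: nearW => n.
  rewrite -(wsum1 R n) /wsum; congr (_ / _); apply: eq_big_nat => i.
  by case/andP=> i_gt0 _; rewrite divff ?expr1n // lt0r_neq0 ?lam_gt0.
Qed.
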